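(* Let $P$ be a convex polygon, let $\mathcal{R}$ be the smallest axis-parallel rectangle containing $P$, with side lengths $L\ge W>0$, and let $r=\frac14\sqrt{L^2+4W^2}$. Suppose that two vertices of $P$ coincide with two opposite (non-adjacent) corners of $\mathcal{R}$. Then $r\le 2\,r_{opt}(P)$.
   Context: For a compact set $X\subset\mathbb{R}^2$, $r_{opt}(X)$ denotes the minimum $r$ such that two closed disks of radius $r$ have union containing $X$. The number $r$ is the radius of the two congruent disks circumscribing the two halves $\frac L2\times W$ of $\mathcal{R}$. *)

From Stdlib Require Import Reals Lra List.
Open Scope R_scope.

Definition point := (R * R)%type.

Definition dist2 (p q : point) : R :=
  sqrt ((fst p - fst q) ^ 2 + (snd p - snd q) ^ 2).

Fixpoint wsum (w : list R) (vs : list point) : point :=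
  match w, vs with
  | a :: w', v :: vs' =>
      let s := wsum w' vs' in (a * fst v + fst s, a * snd v + snd s)
  | _, _ => (0, 0)
  end.

(* The convex polygon P = conv(vs): convex hull of a finite list of points. *)
Definition in_hull (vs : list point) (p : point) : Prop :=
  exists w : list R,
    length w = length vs /\ Forall (fun a => 0 <= a) w /\
    fold_right Rplus 0 w = 1 /\ p = wsum w vs.

Definition in_rect (x0 x1 y0 y1 : R) (p : point) : Prop :=
  x0 <= fst p <= x1 /\ y0 <= snd p <= y1.

Definition is_bounding_box (S : point -> Prop) (x0 x1 y0 y1 : R) : Prop :=
  (forall p, S p -> in_rect x0 x1 y0 y1 p) /\
  (forall a0 a1 b0 b1, (forall p, S p -> in_rect a0 a1 b0 b1 p) ->
     forall p, in_rect x0 x1 y0 y1 p -> in_rect a0 a1 b0 b1 p).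

Definition two_disk_cover (S : point -> Prop) (r : R) : Prop :=
  exists c1 c2 : point, forall p, S p -> dist2 p c1 <= r \/ dist2 p c2 <= r.

Definition is_vertex (S : point -> Prop) (v : point) : Prop :=
  S v /\ forall p q t, S p -> S q -> 0 < t < 1 ->
    v = (t * fst p + (1 - t) * fst q, t * snd p + (1 - t) * snd q) -> p = v /\ q = v.

(* The two opposite corners A, B of the bounding rectangle lie in the polygon,
   hence so does the midpoint M of the diagonal AB.  Two of the three points
   A, M, B lie in a common disk of radius r_opt, and any two of them are at
   distance at least |AB|/2, so |AB| <= 4 r_opt.  Finally
   L^2 + 4 W^2 <= 4 (L^2 + W^2) = 4 |AB|^2. *)
From Stdlib Require Import Reals List Lra Psatz.
Open Scope R_scope.

Definition sqdist (p q : point) : R := (fst p - fst q) ^ 2 + (snd p - snd q) ^ 2.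

Definition midpoint (p q : point) : point :=
  ((fst p + fst q) / 2, (snd p + snd q) / 2).

Lemma sqdist_ge0 (p q : point) : 0 <= sqdist p q.
Proof. unfold sqdist; apply Rplus_le_le_0_compat; apply pow2_ge_0. Qed.

Lemma sqdist_le_of_dist2 (p q : point) (r : R) : dist2 p q <= r -> sqdist p q <= r ^ 2.
Proof.
  change (sqrt (sqdist p q) <= r -> sqdist p q <= r ^ 2); intros Hr.
  rewrite <- (sqrt_sqrt (sqdist p q)) by apply sqdist_ge0.
  pose proof (sqrt_pos (sqdist p q)); nra.
Qed.

Lemma sqdist_le_of_common_disk (p q c : point) (r : R) :
  dist2 p c <= r -> dist2 q c <= r -> sqdist p q <= 4 * r ^ 2.
Proof.
  intros Hp%sqdist_le_of_dist2 Hq%sqdist_le_of_dist2.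
  (* parallelogram law: |p - q|^2 + |p + q - 2c|^2 = 2|p - c|^2 + 2|q - c|^2 *)
  assert (Hpar : sqdist p q <= 2 * sqdist p c + 2 * sqdist q c).
  { destruct p as [p1 p2], q as [q1 q2], c as [c1 c2]; unfold sqdist in *; simpl.
    pose proof (pow2_ge_0 (p1 + q1 - 2 * c1)); pose proof (pow2_ge_0 (p2 + q2 - 2 * c2)).
    lra. }
  lra.
Qed.

Lemma sqdist_midpoint_l (p q : point) : sqdist p (midpoint p q) = sqdist p q / 4.
Proof. unfold sqdist, midpoint; simpl; field. Qed.

Lemma sqdist_midpoint_r (p q : point) : sqdist (midpoint p q) q = sqdist p q / 4.
Proof. unfold sqdist, midpoint; simpl; field. Qed.

Fixpoint wmix (t : R) (w1 w2 : list R) : list R :=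
  match w1, w2 with
  | a :: w1', b :: w2' => (t * a + (1 - t) * b) :: wmix t w1' w2'
  | _, _ => nil
  end.

Lemma wmix_weights (t : R) (vs : list point) : forall w1 w2,
  0 <= t <= 1 -> length w1 = length vs -> length w2 = length vs ->
  Forall (fun a => 0 <= a) w1 -> Forall (fun a => 0 <= a) w2 ->
  length (wmix t w1 w2) = length vs /\ Forall (fun a => 0 <= a) (wmix t w1 w2) /\
  fold_right Rplus 0 (wmix t w1 w2) =
    t * fold_right Rplus 0 w1 + (1 - t) * fold_right Rplus 0 w2 /\
  wsum (wmix t w1 w2) vs =
    (t * fst (wsum w1 vs) + (1 - t) * fst (wsum w2 vs),
     t * snd (wsum w1 vs) + (1 - t) * snd (wsum w2 vs)).
Proof.
  induction vs as [|v vs IH]; intros [|a w1] [|b w2] Ht L1 L2 F1 F2;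
    simpl in *; try discriminate.
  - repeat split; [constructor | lra | f_equal; lra ..].
  - inversion F1; inversion F2; subst.
    destruct (IH w1 w2 Ht) as (L & F & S & E); auto.
    rewrite L, S, E; simpl.
    repeat split; [constructor; auto; nra | lra | f_equal; lra ..].
Qed.

Lemma in_hull_convex (vs : list point) (p q : point) (t : R) :
  0 <= t <= 1 -> in_hull vs p -> in_hull vs q ->
  in_hull vs (t * fst p + (1 - t) * fst q, t * snd p + (1 - t) * snd q).
Proof.
  intros Ht (w1 & L1 & F1 & S1 & ->) (w2 & L2 & F2 & S2 & ->).
  destruct (wmix_weights t vs w1 w2) as (L & F & S & E); auto.
  exists (wmix t w1 w2); repeat split; auto.
  rewrite S, S1, S2; ring.
Qed.

Lemma in_hull_midpoint (vs : list point) (p q : point) :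
  in_hull vs p -> in_hull vs q -> in_hull vs (midpoint p q).
Proof.
  intros Hp Hq.
  replace (midpoint p q) with
    (/ 2 * fst p + (1 - / 2) * fst q, / 2 * snd p + (1 - / 2) * snd q).
  - apply in_hull_convex; auto; lra.
  - unfold midpoint; f_equal; field.
Qed.

Lemma two_disk_cover_ge0 (S : point -> Prop) (p : point) (r : R) :
  S p -> two_disk_cover S r -> 0 <= r.
Proof.
  intros Hp (c1 & c2 & Hc).
  destruct (Hc p Hp) as [H | H]; eapply Rle_trans; eauto; apply sqrt_pos.
Qed.

Lemma two_disk_cover_sqdist (vs : list point) (p q : point) (r : R) :
  in_hull vs p -> in_hull vs q -> two_disk_cover (in_hull vs) r ->
  sqdist p q <= 16 * r ^ 2.
Proof.
  intros Hp Hq Hcov.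
  pose proof (in_hull_midpoint vs p q Hp Hq) as Hm.
  destruct Hcov as (c1 & c2 & Hc).
  pose proof (sqdist_midpoint_l p q); pose proof (sqdist_midpoint_r p q).
  destruct (Hc _ Hp) as [a | a]; destruct (Hc _ Hq) as [b | b];
    destruct (Hc _ Hm) as [m | m];
    first [ pose proof (sqdist_le_of_common_disk _ _ _ _ a b)
          | pose proof (sqdist_le_of_common_disk _ _ _ _ a m)
          | pose proof (sqdist_le_of_common_disk _ _ _ _ m b) ];
    pose proof (sqdist_ge0 p q); lra.
Qed.

Lemma Rmax_Rmin_sq (a b : R) : Rmax a b ^ 2 + Rmin a b ^ 2 = a ^ 2 + b ^ 2.
Proof. unfold Rmax, Rmin; destruct (Rle_dec a b); ring. Qed.

(* Only the two diagonal corners are used. *)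
Theorem lemma3 (vs : list point) (x0 x1 y0 y1 : R) :
  vs <> nil ->
  is_bounding_box (in_hull vs) x0 x1 y0 y1 ->
  let L := Rmax (x1 - x0) (y1 - y0) in
  let W := Rmin (x1 - x0) (y1 - y0) in
  0 < W ->
  ((is_vertex (in_hull vs) (x0, y0) /\ is_vertex (in_hull vs) (x1, y1)) \/
   (is_vertex (in_hull vs) (x0, y1) /\ is_vertex (in_hull vs) (x1, y0))) ->
  forall ropt : R, two_disk_cover (in_hull vs) ropt ->
  / 4 * sqrt (L ^ 2 + 4 * W ^ 2) <= 2 * ropt.
Proof.
  intros _ _ L W HW Hcorners r Hcov.
  assert (Hdiag : (x1 - x0) ^ 2 + (y1 - y0) ^ 2 <= 16 * r ^ 2 /\ 0 <= r).
  { destruct Hcorners as [[[HA _] [HB _]] | [[HA _] [HB _]]];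
      pose proof (two_disk_cover_sqdist vs _ _ r HA HB Hcov) as H;
      unfold sqdist in H; simpl in H;
      (split; [nra | exact (two_disk_cover_ge0 _ _ r HA Hcov)]). }
  destruct Hdiag as [Hdiag Hr].
  pose proof (Rmax_Rmin_sq (x1 - x0) (y1 - y0)) as HLW; fold L W in HLW.
  assert (Hsqrt : sqrt (L ^ 2 + 4 * W ^ 2) <= sqrt ((8 * r) ^ 2))
    by (apply sqrt_le_1_alt; nra).
  rewrite sqrt_pow2 in Hsqrt by lra.
  lra.
Qed.
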